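(* For every integer $n\geq 13$ there exists a neutral graph on $n$ vertices that is not a tree.
   Context: All graphs are finite, simple and connected. For a graph $G=(V,E)$ with $m=|E|\geq 1$ edges, let $d_u$ denote the degree of vertex $u$ and write sums over edges $e_{uv}\in E$ (each edge counted once). The assortativity coefficient of $G$ is $$r(G)=\frac{m^{-1}\sum_{e_{uv}\in E} d_{u}d_{v}-\Big[m^{-1}\sum_{e_{uv}\in E} \tfrac{1}{2}(d_{u}+d_{v})\Big]^{2}}{m^{-1}\sum_{e_{uv}\in E} \tfrac{1}{2}(d^{2}_{u}+d^{2}_{v})-\Big[m^{-1}\sum_{e_{uv}\in E} \tfrac{1}{2}(d_{u}+d_{v})\Big]^{2}},$$ defined whenever the denominator is nonzero. $G$ is called neutral if $r(G)$ is defined and $r(G)=0$. *)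

From mathcomp Require Import all_boot all_order all_algebra.
Set Implicit Arguments. Unset Strict Implicit. Unset Printing Implicit Defensive.
Import Order.TTheory GRing.Theory Num.Theory.

Section Graphs.
Variable n : nat.
Implicit Types e : rel 'I_n.

Definition simple_graph e : Prop := symmetric e /\ irreflexive e.

Definition connected_graph e : Prop := forall x y : 'I_n, connect e x y.

Definition acyclic e : Prop :=
  forall s : seq 'I_n, uniq s -> 3 <= size s -> ~~ cycle e s.

Definition is_tree e : Prop := connected_graph e /\ acyclic e.

Definition deg e (u : 'I_n) : nat := #|[set v | e u v]|.

Definition edge_sum e (F : 'I_n -> 'I_n -> rat) : rat :=
  \sum_(u : 'I_n) \sum_(v : 'I_n | (u < v)%N && e u v) F u v.

Definition nedges e : nat :=
  \sum_(u : 'I_n) \sum_(v : 'I_n | (u < v)%N && e u v) 1.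

Local Open Scope ring_scope.

Definition assort_mean e : rat :=
  (nedges e)%:R^-1 * edge_sum e (fun u v => 2^-1 * ((deg e u)%:R + (deg e v)%:R)).

Definition assort_num e : rat :=
  (nedges e)%:R^-1 * edge_sum e (fun u v => (deg e u)%:R * (deg e v)%:R)
  - (assort_mean e) ^+ 2.

Definition assort_den e : rat :=
  (nedges e)%:R^-1 * edge_sum e (fun u v => 2^-1 * ((deg e u)%:R ^+ 2 + (deg e v)%:R ^+ 2))
  - (assort_mean e) ^+ 2.

Definition assortativity e : rat := assort_num e / assort_den e.

(* r(G) defined (m >= 1 and denominator nonzero) and equal to 0 *)
Definition neutral e : Prop :=
  (0 < nedges e)%N /\ assort_den e != 0 /\ assortativity e = 0.

End Graphs.

(* Take the square of a path on the vertices 4, ..., n-1 (i ~ j iff 1 <= |i - j| <= 2) and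
   attach a fixed gadget on the vertices 0, 1, 2, 3.  Since r(G) only depends on the multiset
   of degree pairs (d_u, d_v) over the edges, and here this multiset consists of 17 fixed
   pairs plus t = 2n - 19 copies of (4, 4), the numerator of r times m^2 is an affine
   function of t.  Both of its coefficients vanish for the 17 fixed pairs, so r = 0 for every
   n >= 13, while the denominator equals 27 / m.  The triangle 4, 5, 6 rules out a tree. *)

From mathcomp Require Import all_boot all_order all_algebra zify ring lra.
Set Implicit Arguments. Unset Strict Implicit. Unset Printing Implicit Defensive.
Import Order.TTheory GRing.Theory Num.Theory.

Section EdgeLists.
Variable n : nat.
Implicit Types (e : rel 'I_n) (u v : 'I_n).

Lemma card_set_val_mem (s : seq nat) : uniq s -> all (fun x => x < n) s ->
  #|[set v : 'I_n | val v \in s]| = size s.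
Proof.
move=> s_uniq s_bound.
rewrite cardsE cardE /enum_mem -enumT /= -(size_map val) -filter_map val_enum_ord.
apply/perm_size/uniq_perm => //; first by rewrite filter_uniq ?iota_uniq.
move=> x; rewrite mem_filter mem_iota add0n /=.
by apply/andP/idP => [[]//|s_x]; split=> //; apply: (allP s_bound).
Qed.

Lemma deg_eq_size e u (s : seq nat) : uniq s -> all (fun x => x < n) s ->
  (forall v, e u v = (val v \in s)) -> deg e u = size s.
Proof.
move=> s_uniq s_bound nbhd; rewrite /deg -card_set_val_mem //.
by apply: eq_card => v; rewrite !inE nbhd.
Qed.

Lemma edge_sum_seq e (s : seq (nat * nat)) (F : nat -> nat -> rat) :
  uniq s -> all (fun p => (p.1 < n) && (p.2 < n)) s ->
  (forall u v, (u < v) && e u v = ((val u, val v) \in s)) ->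
  edge_sum e (fun u v => F u v) = (\sum_(p <- s) F p.1 p.2)%R.
Proof.
move=> s_uniq s_bound s_edges.
rewrite /edge_sum pair_big_dep /= -big_filter.
set r := filter _ _.
pose vals (p : 'I_n * 'I_n) := (val p.1, val p.2).
have vals_inj : injective vals by move=> [u v] [u' v'] [/val_inj -> /val_inj ->].
rewrite (perm_big (map vals r)) ?big_map //.
apply: uniq_perm => //; first by rewrite map_inj_uniq // filter_uniq // index_enum_uniq.
move=> [a b]; apply/idP/mapP => [ab_in_s | [[u v]]].
- have /andP[/= a_lt b_lt] := allP s_bound _ ab_in_s.
  exists (Ordinal a_lt, Ordinal b_lt) => //.
  by rewrite mem_filter s_edges ab_in_s mem_index_enum.
- by rewrite mem_filter /= => /andP[uv _] [-> ->]; rewrite -s_edges.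
Qed.

Lemma nedges_edge_sum e : ((nedges e)%:R = edge_sum e (fun _ _ => 1) :> rat)%R.
Proof. by rewrite natr_sum; apply: eq_bigr => u _; rewrite natr_sum. Qed.

End EdgeLists.

Definition gadget_edges : seq (nat * nat) :=
  [:: (0, 2); (0, 3); (0, 4); (0, 5); (1, 3); (1, 4); (1, 5); (2, 4); (2, 5)].

Definition forward_edge (i j : nat) : bool :=
  ((i, j) \in gadget_edges) || (4 <= i) && ((j == i.+1) || (j == i.+2)).

Definition adjacent (i j : nat) : bool := forward_edge i j || forward_edge j i.

Lemma mem_gadget_edges i j : (i, j) \in gadget_edges -> [&& i < 3, j < 6 & i < j].
Proof.
have all_gadget : all (fun p => [&& p.1 < 3, p.2 < 6 & p.1 < p.2]) gadget_edges by [].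
exact: (allP all_gadget).
Qed.

Lemma forward_edge_lt i j : forward_edge i j -> i < j.
Proof. by case/orP => [/mem_gadget_edges|]; lia. Qed.

Lemma adjacentC : symmetric adjacent.
Proof. by move=> i j; rewrite /adjacent orbC. Qed.

Lemma adjacent_irr : irreflexive adjacent.
Proof. by move=> i; rewrite /adjacent orbb; apply/negP => /forward_edge_lt; rewrite ltnn. Qed.

Lemma adjacent_ge6 i j : 6 <= i ->
  adjacent i j = [|| j == i - 2, j == i - 1, j == i.+1 | j == i.+2].
Proof.
move=> i_ge6; rewrite /adjacent /forward_edge.
have -> : ((i, j) \in gadget_edges) = false by apply/negP => /mem_gadget_edges; lia.
have -> : ((j, i) \in gadget_edges) = false by apply/negP => /mem_gadget_edges; lia.
by rewrite /=; lia.
Qed.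

Lemma mem_map_pair (T U : eqType) (g : T -> U) (s : seq T) x y :
  ((x, y) \in [seq (z, g z) | z <- s]) = (y == g x) && (x \in s).
Proof.
by apply/mapP/andP => [[z z_in_s [-> ->]] | [/eqP -> x_in_s]]; [split | exists x].
Qed.

Lemma iota_trim m l : iota m (l + 4) = [:: m; m.+1] ++ iota m.+2 l ++ [:: l + m.+2; l + m.+3].
Proof. by rewrite (_ : l + 4 = 2 + (l + 2)) ?iotaD ?addn2 ?(addnC l) //; lia. Qed.

Section Construction.
Variable k : nat.
(* Not [k + 13]: [13 + k] reduces to [(12 + k).+1], as [inord] needs. *)
Local Notation n := (13 + k).

Definition neutral_graph : rel 'I_n := fun u v => adjacent u v.

Lemma neutral_graph_simple : simple_graph neutral_graph.
Proof. by split=> [u v | u]; [exact: adjacentC | exact: adjacent_irr]. Qed.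

Lemma neutral_graph_inord a b : a < n -> b < n -> adjacent a b ->
  neutral_graph (inord a) (inord b).
Proof. by move=> a_lt b_lt; rewrite /neutral_graph !inordK. Qed.

Lemma connect_neutral_graph_4 i : i < n -> connect neutral_graph (inord 4) (inord i).
Proof.
elim: i => [|i IH] i_lt; first by apply/connect1/neutral_graph_inord.
have [i_lt4 | i_ge4] := ltnP i 4.
  case: i i_lt4 {IH} i_lt => [|[|[|[|//]]]] _ i_lt.
  - by apply/connect1/neutral_graph_inord.
  - by apply/connect1/neutral_graph_inord.
  - apply: (@connect_trans _ _ (inord 1)); apply/connect1/neutral_graph_inord => //; lia.
  - exact: connect0.
apply: (connect_trans (IH (ltnW i_lt))); apply/connect1/neutral_graph_inord; try lia.
by rewrite /adjacent /forward_edge i_ge4 eqxx !orbT.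
Qed.

Lemma neutral_graph_connected : connected_graph neutral_graph.
Proof.
have sym_connect : connect_sym neutral_graph by apply/sym_connect_sym/adjacentC.
move=> u v; rewrite -(inord_val u) -(inord_val v).
apply: (@connect_trans _ _ (inord 4)); last exact: connect_neutral_graph_4.
by rewrite sym_connect connect_neutral_graph_4.
Qed.

Lemma neutral_graph_not_tree : ~ is_tree neutral_graph.
Proof.
move=> [_ acyclic_graph].
have triangle_uniq : uniq [:: inord 4; inord 5; inord 6 : 'I_n].
  by rewrite -(map_inj_uniq val_inj) /= !inordK //; lia.
have triangle_cycle : cycle neutral_graph [:: inord 4; inord 5; inord 6].
  by rewrite /= /neutral_graph !inordK //; lia.
by move: (acyclic_graph _ triangle_uniq isT); rewrite triangle_cycle.
Qed.

Definition degree_table (i : nat) : nat :=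
  if i == 0 then 4 else if i == 1 then 3 else if i == 2 then 3 else
  if i == 3 then 2 else if i == 4 then 5 else if i == 5 then 6 else
  if i == k + 12 then 2 else if i == k + 11 then 3 else 4.

Lemma degree_table_mid i : 6 <= i <= k + 10 -> degree_table i = 4.
Proof. by move=> i_mid; rewrite /degree_table; repeat case: eqP => ? /=; lia. Qed.

Lemma deg_neutral_graph (u : 'I_n) : deg neutral_graph u = degree_table u.
Proof.
case: u => i i_lt; have [i_lt6 | i_ge6] := ltnP i 6.
  case: i i_lt i_lt6 => [|[|[|[|[|[|//]]]]]] i_lt _.
  - by apply: (@deg_eq_size _ _ _ [:: 2; 3; 4; 5]) => // -[[|[|[|[|[|[|[|[|v]]]]]]]] ?].
  - by apply: (@deg_eq_size _ _ _ [:: 3; 4; 5]) => // -[[|[|[|[|[|[|[|[|v]]]]]]]] ?].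
  - by apply: (@deg_eq_size _ _ _ [:: 0; 4; 5]) => // -[[|[|[|[|[|[|[|[|v]]]]]]]] ?].
  - by apply: (@deg_eq_size _ _ _ [:: 0; 1]) => // -[[|[|[|[|[|[|[|[|v]]]]]]]] ?].
  - by apply: (@deg_eq_size _ _ _ [:: 0; 1; 2; 5; 6]) => // -[[|[|[|[|[|[|[|[|v]]]]]]]] ?].
  - by apply: (@deg_eq_size _ _ _ [:: 0; 1; 2; 4; 6; 7]) => // -[[|[|[|[|[|[|[|[|v]]]]]]]] ?].
have nbhd s : uniq s -> all (fun x => x < n) s -> (forall v, v < n -> adjacent i v = (v \in s)) ->
    deg neutral_graph (Ordinal i_lt) = size s.
  by move=> s_uniq s_bound s_nbhd; apply: deg_eq_size => // -[v v_lt]; apply: s_nbhd.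
rewrite /degree_table /=; do 6 (rewrite ifN_eq; last lia).
case: eqP => [i_last | i_not_last]; last case: eqP => [i_pen | i_not_pen].
- apply: (nbhd [:: i - 2; i - 1]) => /=; [rewrite !inE; lia | lia |].
  by move=> v v_lt; rewrite adjacent_ge6 // !inE; lia.
- apply: (nbhd [:: i - 2; i - 1; i.+1]) => /=; [rewrite !inE; lia | lia |].
  by move=> v v_lt; rewrite adjacent_ge6 // !inE; lia.
- apply: (nbhd [:: i - 2; i - 1; i.+1; i.+2]) => /=; [rewrite !inE; lia | lia |].
  by move=> v v_lt; rewrite adjacent_ge6 // !inE; lia.
Qed.

Lemma degree_table_penultimate : degree_table (k + 11) = 3.
Proof. by rewrite /degree_table; repeat case: eqP => ? /=; lia. Qed.

Lemma degree_table_last : degree_table (k + 12) = 2.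
Proof. by rewrite /degree_table; repeat case: eqP => ? /=; lia. Qed.

Definition edge_list : seq (nat * nat) :=
  gadget_edges ++ [seq (i, i.+1) | i <- iota 4 (n - 5)] ++ [seq (i, i.+2) | i <- iota 4 (n - 6)].

Lemma mem_edge_list (u v : 'I_n) :
  ((u < v) && neutral_graph u v) = ((val u, val v) \in edge_list).
Proof.
case: u v => [u u_lt] [v v_lt] /=.
have -> : (u < v) && neutral_graph (Ordinal u_lt) (Ordinal v_lt) = forward_edge u v.
  apply/idP/idP => [/andP[u_lt_v /orP[// | /forward_edge_lt]] | uv].
    by move/(ltn_trans u_lt_v); rewrite ltnn.
  by rewrite (forward_edge_lt uv) /neutral_graph /adjacent uv.
rewrite /forward_edge /edge_list mem_cat; congr (_ || _).
by rewrite mem_cat !mem_map_pair !mem_iota; lia.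
Qed.

Lemma uniq_edge_list : uniq edge_list.
Proof.
rewrite /edge_list cat_uniq; apply/and3P; split => //.
  apply/hasPn => -[a b]; rewrite mem_cat !mem_map_pair !mem_iota => ab_path.
  by apply/negP => /mem_gadget_edges; lia.
rewrite cat_uniq; apply/and3P; split.
- by rewrite map_inj_uniq ?iota_uniq // => i j [].
- by apply/hasPn => -[a b]; rewrite !mem_map_pair; lia.
- by rewrite map_inj_uniq ?iota_uniq // => i j [].
Qed.

Lemma edge_list_bound : all (fun p => (p.1 < n) && (p.2 < n)) edge_list.
Proof.
apply/allP => -[a b]; rewrite /edge_list !mem_cat !mem_map_pair !mem_iota.
by case/orP => [/mem_gadget_edges|] /=; lia.
Qed.

Local Open Scope ring_scope.

Definition boundary_degree_pairs : seq (nat * nat) :=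
  [:: (4, 3); (4, 2); (4, 5); (4, 6); (3, 2); (3, 5); (3, 6); (3, 5); (3, 6);
      (5, 6); (6, 4); (4, 3); (3, 2); (5, 4); (6, 4); (4, 3); (4, 2)].

Lemma edge_list_degree_sum (f : nat -> nat -> rat) :
  \sum_(p <- edge_list) f (degree_table p.1) (degree_table p.2) =
  \sum_(p <- boundary_degree_pairs) f p.1 p.2 + f 4%N 4%N *+ (2 * k + 7).
Proof.
have mid_sum (g : nat -> nat) l :
    (forall i, 6 <= i < 6 + l -> i <= g i <= k + 10)%N ->
    \sum_(i <- iota 6 l) f (degree_table i) (degree_table (g i)) = f 4%N 4%N *+ l.
  move=> g_mid; rewrite (eq_big_seq (fun => f 4%N 4%N)).
    by rewrite big_const_seq count_predT size_iota iter_addr_0.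
  move=> i; rewrite mem_iota => i_range; have g_range := g_mid i i_range.
  by rewrite !degree_table_mid //; lia.
rewrite /edge_list !big_cat !big_map.
have -> : (n - 5 = k + 4 + 4)%N by lia.
have -> : (n - 6 = k + 3 + 4)%N by lia.
rewrite (iota_trim 4 (k + 4)) (iota_trim 4 (k + 3)) !big_cat /= !big_cons !big_nil.
(* bring the endpoints [l + m.+2], [l + m.+3] of [iota_trim] to the form [k + c] *)
rewrite -!addnA -!addnS !mid_sum; [|lia|lia].
have [d6 d7 d9 d10] : [/\ degree_table 6 = 4, degree_table 7 = 4,
    degree_table (k + 9) = 4 & degree_table (k + 10) = 4]%N.
  by split; apply: degree_table_mid; lia.
rewrite d6 d7 d9 d10 degree_table_penultimate degree_table_last /degree_table /=.
ring.
Qed.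

Lemma edge_sum_neutral_graph (f : nat -> nat -> rat) :
  edge_sum neutral_graph (fun u v => f (deg neutral_graph u) (deg neutral_graph v)) =
  \sum_(p <- boundary_degree_pairs) f p.1 p.2 + f 4%N 4%N *+ (2 * k + 7).
Proof.
rewrite -edge_list_degree_sum -(@edge_sum_seq _ neutral_graph _
  (fun a b => f (degree_table a) (degree_table b)) uniq_edge_list edge_list_bound mem_edge_list).
by apply: eq_bigr => u _; apply: eq_bigr => v _; rewrite !deg_neutral_graph.
Qed.

Lemma nedges_neutral_graph : (nedges neutral_graph)%:R = 2 * k%:R + 24 :> rat.
Proof.
by rewrite nedges_edge_sum (edge_sum_neutral_graph (fun _ _ => 1)) !big_cons big_nil /=; ring.
Qed.

Fact nedges_neutral_graph_gt0 : 0 < 2 * k%:R + 24 :> rat.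
Proof. by have := ler0n rat k; lra. Qed.


Lemma assort_num_neutral_graph : assort_num neutral_graph = 0.
Proof.
have m_neq0 := lt0r_neq0 nedges_neutral_graph_gt0.
rewrite /assort_num /assort_mean nedges_neutral_graph.
rewrite (edge_sum_neutral_graph (fun a b => a%:R * b%:R)).
rewrite (edge_sum_neutral_graph (fun a b => 2^-1 * (a%:R + b%:R))).
rewrite !big_cons !big_nil /=.
by field.
Qed.

Lemma assort_den_neutral_graph : assort_den neutral_graph = 27 / (2 * k%:R + 24).
Proof.
have m_neq0 := lt0r_neq0 nedges_neutral_graph_gt0.
rewrite /assort_den /assort_mean nedges_neutral_graph.
rewrite (edge_sum_neutral_graph (fun a b => 2^-1 * (a%:R ^+ 2 + b%:R ^+ 2))).
rewrite (edge_sum_neutral_graph (fun a b => 2^-1 * (a%:R + b%:R))).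
rewrite !big_cons !big_nil /=.
by field.
Qed.

Lemma neutral_graph_neutral : neutral neutral_graph.
Proof.
have m_gt0 := nedges_neutral_graph_gt0.
split; [|split].
- by rewrite -(ltr0n rat) nedges_neutral_graph.
- by rewrite assort_den_neutral_graph mulf_neq0 ?invr_eq0 ?lt0r_neq0.
- by rewrite /assortativity assort_num_neutral_graph mul0r.
Qed.

End Construction.

Theorem theorem4 (n : nat) : (13 <= n)%N ->
  exists e : rel 'I_n,
    simple_graph e /\ connected_graph e /\ neutral e /\ ~ is_tree e.
Proof.
move=> n_ge13; have [k ->] : exists k, n = 13 + k by exists (n - 13); lia.
exists (@neutral_graph k); split; first exact: neutral_graph_simple.
split; first exact: neutral_graph_connected.
split; first exact: neutral_graph_neutral.
exact: neutral_graph_not_tree.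
Qed.
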